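(* Let $M\in\mathbb{R}^{m\times k}$ and let $P\in\mathbb{R}^{k\times k}$ be a projector along $\ker M$. Let $r:\mathbb{R}^n\to\mathbb{R}^k$ be continuous. Then there is a continuous function $g:\mathbb{R}^n\to\mathbb{R}^k$ such that for all $z\in\mathbb{R}^k$ and $y\in\mathbb{R}^n$: $M^\top Mz+P^\top r(y)=0$ if and only if $Pz=g(y)$.
   Context: A projector along $\ker M$ is a matrix $P$ with $P^2=P$ and $\ker P=\ker M$. *)

From HB Require Import structures.
From mathcomp Require Import all_boot all_order all_algebra.
From mathcomp Require Import all_classical all_reals all_analysis.
Set Implicit Arguments. Unset Strict Implicit. Unset Printing Implicit Defensive.
Import Order.TTheory GRing.Theory Num.Theory.
Local Open Scope ring_scope.

Definition projector_along_ker (R : ringType) (m k : nat)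
  (M : 'M[R]_(m, k)) (P : 'M[R]_k) : Prop :=
  P *m P = P /\ (forall z : 'cV[R]_k, P *m z = 0 <-> M *m z = 0).

From HB Require Import structures.
From mathcomp Require Import all_boot all_order all_algebra.
From mathcomp Require Import all_classical all_reals all_analysis.
Set Implicit Arguments. Unset Strict Implicit. Unset Printing Implicit Defensive.
Import Order.TTheory GRing.Theory Num.Theory.
Import numFieldTopology.Exports numFieldNormedType.Exports.
Local Open Scope ring_scope.

(** With A := M^T M, ker A = ker M = ker P, so the rows of P lie in the row
space of A: P = D A for some D, whence P^T = A D^T.  The equation then reads
A (z + D^T r(y)) = 0, i.e. P (z + D^T r(y)) = 0, i.e. P z = - P D^T r(y), and
g := - P D^T r is continuous because r is. *)

Lemma trmx_mul_self_eq0 (R : realDomainType) m (v : 'cV[R]_m) :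
  v^T *m v = 0 -> v = 0.
Proof.
move=> /matrixP /(_ 0 0); rewrite !mxE => vTv0.
have sumsq0 : \sum_i v i 0 ^+ 2 = 0.
  by rewrite -[RHS]vTv0; apply: eq_bigr => i _; rewrite mxE expr2.
have sq0 i : v i 0 ^+ 2 = 0 by apply: (psumr_eq0P _ sumsq0) => // j _; exact: sqr_ge0.
by apply/matrixP => i j; rewrite (ord1 j) mxE; apply/eqP; rewrite -sqrf_eq0 sq0.
Qed.

Lemma mulmx_gram_eq0 (R : realDomainType) m k (M : 'M[R]_(m, k)) (z : 'cV[R]_k) :
  M^T *m M *m z = 0 <-> M *m z = 0.
Proof.
split=> [Gz0|Mz0]; last by rewrite -mulmxA Mz0 mulmx0.
by apply: trmx_mul_self_eq0; rewrite trmx_mul -mulmxA (mulmxA M^T) Gz0 mulmx0.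
Qed.

Lemma submx_ker (F : fieldType) m n k (A : 'M[F]_(m, k)) (B : 'M[F]_(n, k)) :
  (forall z : 'cV[F]_k, A *m z = 0 -> B *m z = 0) -> (B <= A)%MS.
Proof.
move=> kerAB; rewrite submxE; apply/eqP/matrixP => i j.
have /kerAB : A *m col j (cokermx A) = 0 by rewrite colE mulmxA mulmx_coker mul0mx.
by rewrite colE mulmxA -colE => /matrixP /(_ i 0); rewrite !mxE.
Qed.

Lemma mulmx_continuous (R : numFieldType) p q (L : 'M[R]_(p, q)) :
  continuous (fun x : 'cV[R]_q => L *m x).
Proof.
have -> : (fun x : 'cV[R]_q => L *m x) = fun x => \sum_j x j 0 *: col j L.
  apply/funext => x; apply/matrixP => i c; rewrite (ord1 c) !mxE summxE.
  by apply: eq_bigr => j _; rewrite !mxE mulrC.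
apply: continuous_big => [|j _ x]; first exact: add_continuous.
apply: continuousZr_tmp; exact: coord_continuous.
Qed.

Theorem corollary1 (R : realType) (m k n : nat)
  (M : 'M[R]_(m, k)) (P : 'M[R]_k) (r : 'cV[R]_n -> 'cV[R]_k) :
  projector_along_ker M P ->
  continuous r ->
  exists g : 'cV[R]_n -> 'cV[R]_k,
    continuous g /\
    (forall (z : 'cV[R]_k) (y : 'cV[R]_n),
        (M^T *m M) *m z + P^T *m r y = 0 <-> P *m z = g y).
Proof.
move=> [_ kerPM] r_cont; set A := M^T *m M.
have kerAP (z : 'cV[R]_k) : A *m z = 0 <-> P *m z = 0.
  exact: iff_trans (mulmx_gram_eq0 M z) (iff_sym (kerPM z)).
have /submxP [D PDA] : (P <= A)%MS by apply: submx_ker => z /kerAP.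
have PtA : P^T = A *m D^T by rewrite PDA trmx_mul trmx_mul trmxK.
exists (fun y => - (P *m D^T) *m r y); split.
  by move=> y; apply: continuous_comp; [exact: r_cont | exact: mulmx_continuous].
move=> z y; rewrite PtA -mulmxA -mulmxDr; apply: iff_trans (kerAP _) _.
rewrite mulmxDr mulNmx -mulmxA.
split=> [/eqP | ->]; last by rewrite addNr.
by rewrite addr_eq0 => /eqP.
Qed.
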